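(* Let $\Gamma$ be a group and $\alpha<\mathrm{Lit}(\Gamma)$. Then there exist finite symmetric sets $S\subseteq\Gamma$ of arbitrarily large cardinality such that $\mathrm{Cay}(\Gamma,S)$ is $\sqrt[\alpha]{|S|}$-colourable.
   Context: $T_1(\Gamma)$ is the space of all $f\colon\Gamma\to\mathbf{C}$ for which there exist $f_1,f_2\colon\Gamma\times\Gamma\to\mathbf{C}$ with $f(x^{-1}y)=f_1(x,y)+f_2(x,y)$ for all $x,y$, $\sup_x\sum_y|f_1(x,y)|<\infty$, $\sup_y\sum_x|f_2(x,y)|<\infty$; $\mathrm{Lit}(\Gamma)=\inf\{p>0:T_1(\Gamma)\subseteq\ell^p(\Gamma)\}$. $\mathrm{Cay}(\Gamma,S)$ is the graph with vertex set $\Gamma$ and an edge between $g$ and $gs$ for each $s\in S$. For a real number $t$, a graph is called $t$-colourable if its vertices can be coloured with $\lfloor t\rfloor$ colours so that adjacent vertices get different colours. *)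

From Stdlib Require Import Reals List ZArith.
From Coquelicot Require Import Coquelicot.

Open Scope R_scope.

Record Group := {
  carrier :> Type;
  gmul : carrier -> carrier -> carrier;
  ginv : carrier -> carrier;
  gone : carrier;
  gmul_assoc : forall x y z, gmul x (gmul y z) = gmul (gmul x y) z;
  gmul_1l : forall x, gmul gone x = x;
  gmul_Vl : forall x, gmul (ginv x) x = gone
}.

Definition lsum {T : Type} (g : T -> R) (s : list T) : R :=
  fold_right Rplus 0 (map g s).

(* sum_y g y < oo for g >= 0 (unordered sum): bounded finite partial sums *)
Definition abs_summable_bound {T : Type} (g : T -> C) (M : R) : Prop :=
  forall s : list T, NoDup s -> lsum (fun y => Cmod (g y)) s <= M.

Definition T1 (G : Group) (f : G -> C) : Prop :=
  exists f1 f2 : G -> G -> C,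
    (forall x y : G, f (gmul G (ginv G x) y) = Cplus (f1 x y) (f2 x y)) /\
    (exists M, forall x : G, abs_summable_bound (fun y => f1 x y) M) /\
    (exists M, forall y : G, abs_summable_bound (fun x => f2 x y) M).

Definition rpow (a p : R) : R :=
  if Req_EM_T a 0 then 0 else Rpower a p.

Definition in_lp (G : Group) (p : R) (f : G -> C) : Prop :=
  exists M, forall s : list G, NoDup s ->
    lsum (fun x => rpow (Cmod (f x)) p) s <= M.

Definition Lit (G : Group) : Rbar :=
  Glb_Rbar (fun p => 0 < p /\ forall f : G -> C, T1 G f -> in_lp G p f).

Definition symmetric_set (G : Group) (S : list G) : Prop :=
  forall s, In s S -> In (ginv G s) S.

(* Cay(G,S) is t-colourable: a proper colouring with floor(t) colours *)
Definition cay_colourable (G : Group) (S : list G) (t : R) : Prop :=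
  exists c : G -> nat,
    (forall g : G, (Z.of_nat (c g) < Int_part t)%Z) /\
    (forall (g : G) (s : G), In s S -> c g <> c (gmul G g s)).

(* Since alpha < Lit(G), there are p > alpha and f in T_1(G) outside l^p.  Write
   f(x^-1 y) = f1(x,y) + f2(x,y), the rows of |f1| and the columns of |f2|
   summing to at most M1 and M2, so that |f| <= B := M1 + M2.  As p/alpha > 1,
   if every level set {|f| >= eps} had fewer than N + (K/eps)^alpha points, the
   decreasing rearrangement of |f| would be O(n^(-1/alpha)) and f would lie in
   l^p; so some level set A is large, and S is A symmetrised, without 1.
   On an edge {x, xs} of Cay(G,S), |f1| or |f2| is at least eps/2 at (x,xs) or
   at (xs,x); orienting the edge accordingly bounds all out-degrees by
   D ~ 2B/eps.  Hence every finite subgraph has a vertex of degree <= 2D and is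
   (2D+1)-colourable, and by compactness so is Cay(G,S).  For K = 7B + 1,
   2D + 1 <= K/eps <= |S|^(1/alpha). *)

From Stdlib Require Import Reals List ZArith Lia Lra ClassicalEpsilon Classical FunctionalExtensionality PropExtensionality.
From Coquelicot Require Import Coquelicot.
Import ListNotations.
Local Open Scope nat_scope.

Definition asbool (P : Prop) : bool :=
  if excluded_middle_informative P then true else false.

Lemma asboolP (P : Prop) : reflect P (asbool P).
Proof. unfold asbool; destruct (excluded_middle_informative P); constructor; assumption. Qed.

Definition classic_eq_dec {V : Type} (x y : V) : {x = y} + {x <> y} :=
  excluded_middle_informative (x = y).

Lemma NoDup_remove_classic {V : Type} (v : V) (l : list V) :
  NoDup l -> NoDup (remove classic_eq_dec v l).
Proof. intros Hl. rewrite <- remove_alt. apply NoDup_filter, Hl. Qed.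

Definition count_in {V : Type} (P : V -> Prop) (l : list V) : nat :=
  length (filter (fun y => asbool (P y)) l).

Fixpoint nsum {V : Type} (g : V -> nat) (l : list V) : nat :=
  match l with [] => 0 | x :: l' => g x + nsum g l' end.

Lemma count_in_cons {V : Type} (P : V -> Prop) x l :
  count_in P (x :: l) = (if asbool (P x) then 1 else 0) + count_in P l.
Proof. unfold count_in; simpl; destruct (asbool (P x)); reflexivity. Qed.

Lemma count_in_nsum {V : Type} (P : V -> Prop) l :
  count_in P l = nsum (fun y => if asbool (P y) then 1 else 0) l.
Proof. induction l as [|x l IH]; [reflexivity|]. rewrite count_in_cons, IH. reflexivity. Qed.

Lemma count_in_or_le {V : Type} (P Q : V -> Prop) l :
  count_in (fun y => P y \/ Q y) l <= count_in P l + count_in Q l.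
Proof.
  induction l as [|x l IH]; [reflexivity|]. rewrite !count_in_cons.
  destruct (asboolP (P x \/ Q x)), (asboolP (P x)), (asboolP (Q x)); tauto || lia.
Qed.

Lemma count_in_NoDup_le {V : Type} (P : V -> Prop) (L X : list V) :
  NoDup L -> (forall y, In y L -> In y X /\ P y) -> length L <= count_in P X.
Proof.
  intros HL HLX. apply NoDup_incl_length; [exact HL|]. intros y Hy.
  destruct (HLX y Hy) as [HyX HPy]. apply filter_In. split; [exact HyX|].
  destruct (asboolP (P y)); tauto.
Qed.

Lemma nsum_le {V : Type} (g h : V -> nat) l :
  (forall x, In x l -> g x <= h x) -> nsum g l <= nsum h l.
Proof.
  induction l as [|x l IH]; simpl; intros H; [lia|].
  specialize (IH (fun y Hy => H y (or_intror Hy))). specialize (H x (or_introl eq_refl)). lia.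
Qed.

Lemma nsum_ext {V : Type} (g h : V -> nat) l : (forall x, g x = h x) -> nsum g l = nsum h l.
Proof. intros H; induction l; simpl; auto. Qed.

Lemma nsum_add {V : Type} (g h : V -> nat) l :
  nsum (fun x => g x + h x) l = nsum g l + nsum h l.
Proof. induction l; simpl; lia. Qed.

Lemma nsum_const {V : Type} (m : nat) (l : list V) : nsum (fun _ => m) l = m * length l.
Proof. induction l; simpl; lia. Qed.

Lemma nsum_comm {V W : Type} (g : V -> W -> nat) (l1 : list V) (l2 : list W) :
  nsum (fun x => nsum (g x) l2) l1 = nsum (fun y => nsum (fun x => g x y) l1) l2.
Proof.
  induction l1 as [|x l1 IH]; simpl.
  - induction l2; simpl; lia.
  - rewrite IH, <- nsum_add. reflexivity.
Qed.

Lemma exists_not_In_lt (l : list nat) (k : nat) :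
  length l < k -> exists j, j < k /\ ~ In j l.
Proof.
  intros Hlen. apply NNPP; intros Hnot.
  assert (Hincl : incl (seq 0 k) l).
  { intros j Hj. apply in_seq in Hj. apply NNPP; intros Hj'. apply Hnot. exists j; split; [lia|exact Hj']. }
  apply NoDup_incl_length in Hincl; [|apply seq_NoDup]. rewrite length_seq in Hincl. lia.
Qed.

Section DegenerateColouring.
Variables (V : Type) (adj orient : V -> V -> Prop) (D : nat).
Hypothesis adj_irrefl : forall x, ~ adj x x.
Hypothesis adj_oriented : forall x y, adj x y -> orient x y \/ orient y x.
Hypothesis outdeg_le : forall v L, NoDup L -> (forall y, In y L -> orient v y) -> length L <= D.

Let deg (X : list V) (v : V) : nat := count_in (fun y => orient v y \/ orient y v) X.

Lemma count_out_le v X : NoDup X -> count_in (orient v) X <= D.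
Proof.
  intros HX. apply (outdeg_le v); [apply NoDup_filter, HX|].
  intros y Hy. apply filter_In in Hy. destruct (asboolP (orient v y)); [assumption|].
  destruct Hy; discriminate.
Qed.

Lemma sum_deg_le X : NoDup X -> nsum (deg X) X <= 2 * D * length X.
Proof.
  intros HX.
  assert (Hin_out : nsum (fun v => count_in (fun y => orient y v) X) X
                    = nsum (fun y => count_in (orient y) X) X).
  { rewrite (nsum_ext _ (fun v => nsum (fun y => if asbool (orient y v) then 1 else 0) X))
      by (intros; apply count_in_nsum).
    rewrite nsum_comm. apply nsum_ext. intros; symmetry; apply count_in_nsum. }
  assert (Hout : nsum (fun v => count_in (orient v) X) X <= D * length X).
  { rewrite <- nsum_const. apply nsum_le. intros; apply count_out_le, HX. }
  apply Nat.le_trans with (nsum (fun v => count_in (orient v) X + count_in (fun y => orient y v) X) X).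
  - apply nsum_le. intros; apply count_in_or_le.
  - rewrite nsum_add, Hin_out. lia.
Qed.

Lemma exists_low_deg X : NoDup X -> X <> [] -> exists v, In v X /\ deg X v <= 2 * D.
Proof.
  intros HX Hne. apply NNPP; intros Hnone.
  assert (Hhigh : nsum (fun _ => S (2 * D)) X <= nsum (deg X) X).
  { apply nsum_le. intros v Hv. apply NNPP; intros Hv'. apply Hnone. exists v; split; [exact Hv|lia]. }
  rewrite nsum_const in Hhigh. assert (Hsum := sum_deg_le X HX).
  destruct X; [contradiction|]. simpl length in *. lia.
Qed.

Lemma finite_colouring_of_bounded_outdeg (X : list V) : NoDup X ->
  exists c : V -> nat, (forall v, c v < 2 * D + 1) /\
    (forall x y, In x X -> In y X -> adj x y -> c x <> c y).
Proof.
  remember (length X) as n eqn:Hn. revert X Hn.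
  induction n as [n IH] using lt_wf_ind; intros X Hn HX.
  destruct (classic (X = [])) as [->|Hne].
  { exists (fun _ => 0). split; [intros; lia|intros x y []]. }
  destruct (exists_low_deg X HX Hne) as [v [Hv Hdeg]].
  set (X' := remove classic_eq_dec v X).
  destruct (IH (length X') ltac:(subst n; apply remove_length_lt, Hv) X' eq_refl
              (NoDup_remove_classic v X HX)) as [c' [Hc'lt Hc'prop]].
  set (nbrs := filter (fun y => asbool (adj v y \/ adj y v)) X').
  assert (Hnbrs : length (map c' nbrs) < 2 * D + 1).
  { rewrite length_map. apply Nat.le_lt_trans with (deg X v); [|lia].
    apply count_in_NoDup_le; [apply NoDup_filter, NoDup_remove_classic, HX|].
    intros y Hy. apply filter_In in Hy. destruct Hy as [HyX' Hadj].
    apply in_remove in HyX'. split; [tauto|].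
    destruct (asboolP (adj v y \/ adj y v)) as [[H|H]|]; [..|discriminate];
      apply adj_oriented in H; tauto. }
  destruct (exists_not_In_lt _ _ Hnbrs) as [j [Hj Hjfree]].
  exists (fun u => if classic_eq_dec u v then j else c' u). split.
  - intros u. destruct (classic_eq_dec u v); auto.
  - assert (Hfree : forall y, In y X -> y <> v -> adj v y \/ adj y v -> j <> c' y).
    { intros y Hy Hyv Hadj Hjy. apply Hjfree. rewrite Hjy. apply in_map, filter_In.
      split; [apply in_in_remove; assumption|]. destruct (asboolP (adj v y \/ adj y v)); tauto. }
    intros x y Hx Hy Hxy.
    destruct (classic_eq_dec x v) as [->|Hxv], (classic_eq_dec y v) as [->|Hyv].
    + destruct (adj_irrefl v Hxy).
    + apply Hfree; auto.
    + intros E; symmetry in E; revert E; apply Hfree; auto.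
    + apply Hc'prop; auto; apply in_in_remove; assumption.
Qed.

End DegenerateColouring.

Section NatCompactness.
Variables (adj : nat -> nat -> Prop) (k : nat).

Definition proper_below (n : nat) (c : nat -> nat) : Prop :=
  (forall i, c i < k) /\ (forall i j, i < n -> j < n -> adj i j -> c i <> c j).

Hypothesis colourable_below : forall n, exists c, proper_below n c.

Definition extendable (s : nat -> nat) (m : nat) : Prop :=
  forall n, exists c, proper_below n c /\ (forall i, i < m -> c i = s i).

Definition set_at (s : nat -> nat) (m j : nat) : nat -> nat :=
  fun i => if Nat.eqb i m then j else s i.

Lemma proper_below_mono n n' c : n' <= n -> proper_below n c -> proper_below n' c.
Proof. intros Hle [Hlt Hprop]. split; [exact Hlt|]. intros i j Hi Hj. apply Hprop; lia. Qed.

Lemma uniform_bound (Q : nat -> nat -> Prop) (K : nat) :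
  (forall j n n', n <= n' -> Q j n -> Q j n') ->
  (forall j, j < K -> exists n, Q j n) -> exists n, forall j, j < K -> Q j n.
Proof.
  intros Hmono. induction K as [|K IH]; intros HQ.
  - exists 0. intros; lia.
  - destruct IH as [n1 Hn1]; [intros j Hj; apply HQ; lia|].
    destruct (HQ K) as [n2 Hn2]; [lia|].
    exists (Nat.max n1 n2). intros j Hj.
    destruct (Nat.eq_dec j K) as [->|HjK].
    + apply Hmono with n2; [lia|exact Hn2].
    + apply Hmono with n1; [lia|apply Hn1; lia].
Qed.

(* König's lemma: if every colour j < k for [m] failed to extend to some
   [0, n_j), all of them would fail on [0, max n_j), where [s] does extend. *)
Lemma extendable_step s m :
  extendable s m -> exists j, j < k /\ extendable (set_at s m j) (S m).
Proof.
  intros Hs. apply NNPP; intros Hnone.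
  set (Q := fun j n => ~ exists c, proper_below n c /\
                          (forall i, i < S m -> c i = set_at s m j i)).
  destruct (uniform_bound Q k) as [n Hn].
  - intros j n n' Hle HQ [c [Hc Hcs]]. apply HQ. exists c.
    split; [exact (proper_below_mono _ _ _ Hle Hc)|exact Hcs].
  - intros j Hj. apply NNPP; intros Hj'. apply Hnone. exists j. split; [exact Hj|].
    intros n. apply NNPP; intros Hn. apply Hj'. exists n. exact Hn.
  - destruct (Hs n) as [c [Hc Hcs]].
    apply (Hn (c m)); [apply Hc|]. exists c. split; [exact Hc|].
    intros i Hi. unfold set_at. destruct (Nat.eqb_spec i m) as [->|Him]; [reflexivity|].
    apply Hcs; lia.
Qed.

Definition next_colour (s : nat -> nat) (m : nat) : nat :=
  epsilon (inhabits 0) (fun j => j < k /\ extendable (set_at s m j) (S m)).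

Fixpoint prefix_colouring (m : nat) : nat -> nat :=
  match m with
  | O => fun _ => 0
  | S m' => set_at (prefix_colouring m') m' (next_colour (prefix_colouring m') m')
  end.

Lemma prefix_colouring_extendable m : extendable (prefix_colouring m) m.
Proof.
  induction m as [|m IH].
  - intros n. destruct (colourable_below n) as [c Hc]. exists c. split; [exact Hc|intros; lia].
  - apply (epsilon_spec (inhabits 0) (fun j => j < k /\ extendable (set_at _ m j) (S m))).
    apply extendable_step, IH.
Qed.

Lemma prefix_colouring_stable i m : i < m -> prefix_colouring m i = prefix_colouring (S i) i.
Proof.
  induction m as [|m IH]; intros Him; [lia|].
  destruct (Nat.eq_dec i m) as [->|Hne]; [reflexivity|].
  simpl. unfold set_at. destruct (Nat.eqb_spec i m); [lia|]. apply IH; lia.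
Qed.

Theorem nat_colouring_compactness :
  exists c, (forall i, c i < k) /\ (forall i j, adj i j -> c i <> c j).
Proof.
  exists (fun i => prefix_colouring (S i) i). split.
  - intros i. destruct (prefix_colouring_extendable (S i) 0) as [c [[Hlt _] Hc]].
    rewrite <- Hc; [apply Hlt|lia].
  - intros i j Hij. set (m := S (Nat.max i j)).
    destruct (prefix_colouring_extendable m m) as [c [[_ Hprop] Hc]].
    rewrite <- (prefix_colouring_stable i m), <- (prefix_colouring_stable j m) by lia.
    rewrite <- !Hc by lia. apply Hprop; [lia|lia|exact Hij].
Qed.

End NatCompactness.

Section GroupFacts.
Variable G : Group.
Local Notation "x ⋅ y" := (gmul G x y) (at level 40, left associativity).
Local Notation "x ^-1" := (ginv G x) (at level 9).
Local Notation e := (gone G).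

Lemma gmulV x : x ⋅ x^-1 = e.
Proof.
  assert (Hidem : (x ⋅ x^-1) ⋅ (x ⋅ x^-1) = x ⋅ x^-1).
  { rewrite <- gmul_assoc, (gmul_assoc _ x^-1 x), gmul_Vl, gmul_1l. reflexivity. }
  assert (H : (x ⋅ x^-1)^-1 ⋅ ((x ⋅ x^-1) ⋅ (x ⋅ x^-1)) = (x ⋅ x^-1)^-1 ⋅ (x ⋅ x^-1))
    by (rewrite Hidem; reflexivity).
  rewrite gmul_assoc, gmul_Vl, gmul_1l in H. exact H.
Qed.

Lemma gmul1r x : x ⋅ e = x.
Proof. rewrite <- (gmul_Vl G x), gmul_assoc, gmulV, gmul_1l. reflexivity. Qed.

Lemma gmulKg x y : x^-1 ⋅ (x ⋅ y) = y.
Proof. rewrite gmul_assoc, gmul_Vl, gmul_1l. reflexivity. Qed.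

Lemma gmulgK x y : (x ⋅ y) ⋅ y^-1 = x.
Proof. rewrite <- gmul_assoc, gmulV, gmul1r. reflexivity. Qed.

Lemma gmul_invM_l x y : (x ⋅ y)^-1 ⋅ x = y^-1.
Proof.
  rewrite <- (gmulgK ((x ⋅ y)^-1 ⋅ x) y), <- (gmul_assoc G (x ⋅ y)^-1 x y), gmul_Vl, gmul_1l.
  reflexivity.
Qed.

Lemma ginvK x : x^-1^-1 = x.
Proof. rewrite <- (gmul1r (x^-1^-1)), <- (gmul_Vl G x), gmul_assoc, gmul_Vl, gmul_1l. reflexivity. Qed.

Lemma ginv_eq1 x : x^-1 = e -> x = e.
Proof. intros Hx. rewrite <- (gmulV x), Hx, gmul1r. reflexivity. Qed.

End GroupFacts.

Section CayleyCompactness.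
Variables (G : Group) (gens : list G) (k : nat).
Local Notation "x ⋅ y" := (gmul G x y) (at level 40, left associativity).
Local Notation "x ^-1" := (ginv G x) (at level 9).
Local Notation e := (gone G).

Hypothesis gens_symmetric : symmetric_set G gens.
Hypothesis gens_nonempty : gens <> [].
Hypothesis finitely_colourable : forall X : list G, NoDup X ->
  exists c : G -> nat, (forall g, c g < k) /\
    (forall x s, In x X -> In s gens -> In (x ⋅ s) X -> c x <> c (x ⋅ s)).

Fixpoint ball (n : nat) : list G :=
  match n with
  | O => [e]
  | S n' => ball n' ++ flat_map (fun g => map (fun s => g ⋅ s) gens) (ball n')
  end.

Lemma ball_prefix n m : n <= m -> exists t, ball m = ball n ++ t.
Proof.
  induction 1 as [|m _ [t Ht]].
  - exists []. rewrite app_nil_r. reflexivity.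
  - simpl. rewrite Ht, <- app_assoc. eexists. reflexivity.
Qed.

Lemma ball_length_gt n : n < length (ball n).
Proof.
  induction n as [|n IH]; simpl; [lia|].
  rewrite length_app. destruct (ball n) as [|g l]; [simpl in IH; lia|].
  simpl. rewrite length_app, length_map. destruct gens; [contradiction|]. simpl in *. lia.
Qed.

Lemma ball_mul n h s : In h (ball n) -> In s gens -> In (h ⋅ s) (ball (S n)).
Proof.
  intros Hh Hs. simpl. apply in_or_app; right. apply in_flat_map. exists h.
  split; [exact Hh|apply in_map, Hs].
Qed.

(* The balls are nested prefixes of each other, so this enumerates the
   subgroup generated by [gens]. *)
Definition span_enum (i : nat) : G := nth i (ball i) e.

Lemma span_enum_onto n h : In h (ball n) -> exists i, span_enum i = h.
Proof.
  intros Hh. destruct (In_nth _ _ e Hh) as [i [Hi Hnth]]. exists i. unfold span_enum.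
  destruct (Nat.le_gt_cases i n) as [Hin|Hni].
  - destruct (ball_prefix i n Hin) as [t Ht]. rewrite Ht, app_nth1 in Hnth; [exact Hnth|].
    apply ball_length_gt.
  - destruct (ball_prefix n i ltac:(lia)) as [t Ht]. rewrite Ht, app_nth1; assumption.
Qed.

Definition in_span (h : G) : Prop := exists n, In h (ball n).

Lemma in_span1 : in_span e.
Proof. exists 0. left. reflexivity. Qed.

Lemma in_span_mul h s : in_span h -> In s gens -> in_span (h ⋅ s).
Proof. intros [n Hn] Hs. exists (S n). apply ball_mul; assumption. Qed.

Definition span_adj (i j : nat) : Prop := exists s, In s gens /\ span_enum j = span_enum i ⋅ s.

Lemma span_colourable_below n : exists c, proper_below span_adj k n c.
Proof.
  set (X := nodup classic_eq_dec (map span_enum (seq 0 n))).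
  assert (HX : forall i, i < n -> In (span_enum i) X).
  { intros i Hi. apply nodup_In, in_map, in_seq. lia. }
  destruct (finitely_colourable X (NoDup_nodup _ _)) as [c [Hlt Hprop]].
  exists (fun i => c (span_enum i)). split; [intros; apply Hlt|].
  intros i j Hi Hj [s [Hs Hij]]. rewrite Hij.
  apply Hprop; [apply HX, Hi|exact Hs|rewrite <- Hij; apply HX, Hj].
Qed.

Definition coset_rep (g : G) : G := epsilon (inhabits e) (fun r => in_span (r^-1 ⋅ g)).

Definition span_index (h : G) : nat := epsilon (inhabits 0) (fun i => span_enum i = h).

Lemma coset_rep_spec g : in_span ((coset_rep g)^-1 ⋅ g).
Proof.
  apply (epsilon_spec (inhabits e) (fun r => in_span (r^-1 ⋅ g))).
  exists g. rewrite gmul_Vl. apply in_span1.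
Qed.

Lemma coset_rep_mul g s : In s gens -> coset_rep (g ⋅ s) = coset_rep g.
Proof.
  intros Hs. unfold coset_rep. f_equal. apply functional_extensionality. intros r.
  apply propositional_extensionality. split; intros Hr.
  - rewrite <- (gmulgK G (r^-1 ⋅ g) s). apply in_span_mul; [|apply gens_symmetric, Hs].
    rewrite <- gmul_assoc. exact Hr.
  - rewrite gmul_assoc. apply in_span_mul; assumption.
Qed.

Lemma span_index_spec h : in_span h -> span_enum (span_index h) = h.
Proof.
  intros [n Hn]. apply (epsilon_spec (inhabits 0) (fun i => span_enum i = h)).
  apply (span_enum_onto n h Hn).
Qed.

(* Each left coset of <gens> is coloured by translating a colouring of <gens>. *)
Theorem cayley_colouring_compactness : exists c : G -> nat,
  (forall g, c g < k) /\ (forall g s, In s gens -> c g <> c (g ⋅ s)).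
Proof.
  destruct (nat_colouring_compactness span_adj k span_colourable_below) as [cn [Hlt Hprop]].
  exists (fun g => cn (span_index ((coset_rep g)^-1 ⋅ g))). split; [intros; apply Hlt|].
  intros g s Hs. rewrite coset_rep_mul by exact Hs.
  apply Hprop. exists s. split; [exact Hs|].
  assert (Hg := coset_rep_spec g).
  rewrite !span_index_spec, gmul_assoc; [reflexivity|exact Hg|].
  rewrite gmul_assoc. apply in_span_mul; assumption.
Qed.

End CayleyCompactness.

Local Open Scope R_scope.

Lemma Rpower_gt0 x y : 0 < Rpower x y.
Proof. apply exp_pos. Qed.

Lemma Rpower_1_base y : Rpower 1 y = 1.
Proof. unfold Rpower. rewrite ln_1, Rmult_0_r. apply exp_0. Qed.

(* Discrete form of the integral of t^(-q) over [x, x + 1], from the estimates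
   exp u >= 1 + u and ln (1 + 1/x) >= 1/(x + 1). *)
Lemma Rpower_telescope (q x : R) : 1 < q -> 1 <= x ->
  (q - 1) * Rpower (x + 1) (- q) + Rpower (x + 1) (1 - q) <= Rpower x (1 - q).
Proof.
  intros Hq Hx.
  set (P := Rpower (x + 1) (1 - q)). set (L := ln (x + 1) - ln x).
  assert (Hshift : Rpower (x + 1) (- q) = P / (x + 1)).
  { unfold P. replace (- q) with ((1 - q) + - (1)) by ring.
    rewrite Rpower_plus, Rpower_Ropp, Rpower_1 by lra. reflexivity. }
  assert (Hratio : Rpower x (1 - q) = P * exp ((q - 1) * L)).
  { unfold P, L, Rpower. rewrite <- exp_plus. f_equal. ring. }
  assert (HL : / (x + 1) <= L).
  { assert (H := exp_ineq1_le (ln (x / (x + 1)))).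
    rewrite exp_ln, ln_div in H by (try apply Rdiv_lt_0_compat; lra).
    replace (x / (x + 1)) with (1 - / (x + 1)) in H by (field; lra).
    unfold L. lra. }
  assert (Hexp := exp_ineq1_le ((q - 1) * L)).
  assert (HqL : (q - 1) * / (x + 1) <= (q - 1) * L) by (apply Rmult_le_compat_l; lra).
  assert (HP : 0 < P) by apply Rpower_gt0.
  rewrite Hshift, Hratio. unfold Rdiv. nra.
Qed.

Fixpoint zeta_partial (q : R) (n : nat) : R :=
  match n with
  | O => 0
  | S m => zeta_partial q m + Rpower (INR (S m)) (- q)
  end.

Lemma zeta_partial_le_tail q n : 1 < q -> (1 <= n)%nat ->
  zeta_partial q n <= q / (q - 1) - Rpower (INR n) (1 - q) / (q - 1).
Proof.
  intros Hq. induction n as [|n IH]; intros Hn; [lia|].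
  change (zeta_partial q (S n)) with (zeta_partial q n + Rpower (INR (S n)) (- q)).
  destruct (Nat.eq_dec n 0) as [->|Hn0].
  - change (INR 1) with 1. rewrite !Rpower_1_base. simpl. apply Req_le. field. lra.
  - specialize (IH ltac:(lia)). rewrite S_INR.
    assert (Htele := Rpower_telescope q (INR n) Hq ltac:(apply (le_INR 1); lia)).
    apply Rle_trans with (q / (q - 1) - Rpower (INR n) (1 - q) / (q - 1) + Rpower (INR n + 1) (- q));
      [lra|].
    unfold Rdiv. apply Rmult_le_reg_l with (q - 1); [lra|].
    field_simplify; [|lra..]. lra.
Qed.

Lemma zeta_partial_le q n : 1 < q -> zeta_partial q n <= q / (q - 1).
Proof.
  intros Hq. destruct n as [|n].
  - simpl. apply Rlt_le, Rdiv_lt_0_compat; lra.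
  - assert (Htail := zeta_partial_le_tail q (S n) Hq ltac:(lia)).
    assert (0 < Rpower (INR (S n)) (1 - q) / (q - 1)) by (apply Rdiv_lt_0_compat; [apply Rpower_gt0|lra]).
    lra.
Qed.

Lemma rpow_ge0 a p : 0 <= rpow a p.
Proof. unfold rpow. destruct (Req_EM_T a 0); [lra|apply Rlt_le, Rpower_gt0]. Qed.

Lemma rpow_le a b p : 0 < p -> 0 <= a <= b -> rpow a p <= rpow b p.
Proof.
  intros Hp [Ha Hab]. unfold rpow at 1. destruct (Req_EM_T a 0); [apply rpow_ge0|].
  unfold rpow. destruct (Req_EM_T b 0); [lra|]. apply Rle_Rpower_l; lra.
Qed.

Lemma lsum_app {T : Type} (g : T -> R) l1 l2 : lsum g (l1 ++ l2) = lsum g l1 + lsum g l2.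
Proof. unfold lsum. rewrite map_app, fold_right_app. induction l1; simpl; lra. Qed.

Lemma lsum_ge_const {T : Type} (g : T -> R) (a : R) (L : list T) :
  (forall y, In y L -> a <= g y) -> INR (length L) * a <= lsum g L.
Proof.
  induction L as [|x L IH]; intros H; [unfold lsum; simpl; lra|].
  change (INR (S (length L)) * a <= g x + lsum g L). rewrite S_INR.
  specialize (IH (fun y Hy => H y (or_intror Hy))). specialize (H x (or_introl eq_refl)). lra.
Qed.

Lemma exists_argmin {T : Type} (g : T -> R) (s : list T) :
  s <> [] -> exists x, In x s /\ forall y, In y s -> g x <= g y.
Proof.
  induction s as [|a s IH]; intros Hne; [contradiction|].
  destruct (classic (s = [])) as [->|Hs].
  - exists a. split; [left; reflexivity|]. intros y [<-|[]]. lra.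
  - destruct (IH Hs) as [x [Hx Hmin]].
    destruct (Rle_lt_dec (g a) (g x)).
    + exists a. split; [left; reflexivity|]. intros y [<-|Hy]; [lra|]. specialize (Hmin y Hy). lra.
    + exists x. split; [right; exact Hx|]. intros y [<-|Hy]; [lra|auto].
Qed.

Section LevelSets.
Variables (G : Group) (f : G -> C) (B p alpha K : R) (N : nat).
Hypothesis alpha_gt0 : 0 < alpha.
Hypothesis alpha_lt_p : alpha < p.
Hypothesis K_gt0 : 0 < K.
Hypothesis f_le : forall z, Cmod (f z) <= B.
Hypothesis level_sets_small : forall eps, 0 < eps -> forall A : list G, NoDup A ->
  (forall a, In a A -> eps <= Cmod (f a)) -> INR (length A) < INR N + Rpower (K / eps) alpha.

Let q := p / alpha.

Lemma exponent_ratio_gt1 : 1 < q.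
Proof. unfold q. apply Rlt_div_r; lra. Qed.

(* Beyond the first 2N values, the decreasing rearrangement of |f| satisfies
   f*(n) <= K (2/n)^(1/alpha). *)
Lemma rpow_of_min_le (s : list G) (x : G) : NoDup s -> (2 * N < length s)%nat ->
  (forall y, In y s -> Cmod (f x) <= Cmod (f y)) ->
  rpow (Cmod (f x)) p <= Rpower K p * Rpower 2 q * Rpower (INR (length s)) (- q).
Proof.
  intros Hs Hlen Hmin. set (m := Cmod (f x)) in *. set (t := INR (length s)).
  unfold rpow. destruct (Req_EM_T m 0) as [_|Hm0].
  { apply Rlt_le, Rmult_lt_0_compat; [apply Rmult_lt_0_compat|]; apply Rpower_gt0. }
  assert (Hm : 0 < m) by (generalize (Cmod_ge_0 (f x)); fold m; lra).
  assert (Ht : 2 * INR N < t).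
  { unfold t. replace 2 with (INR 2) by reflexivity. rewrite <- mult_INR. apply lt_INR, Hlen. }
  assert (Hlevel := level_sets_small m Hm s Hs Hmin). fold t in Hlevel.
  assert (Hln : ln (t / 2) < alpha * ln (K / m)).
  { rewrite <- ln_Rpower. apply ln_increasing; [generalize (pos_INR N); lra|lra]. }
  rewrite ln_div, ln_div in Hln by (generalize (pos_INR N); lra).
  assert (Hqp : q * alpha = p) by (unfold q; field; lra).
  assert (Hq := exponent_ratio_gt1).
  assert (Hscaled : q * (ln t - ln 2) < q * (alpha * (ln K - ln m)))
    by (apply Rmult_lt_compat_l; lra).
  unfold Rpower. rewrite <- !exp_plus. apply Rlt_le, exp_increasing. nra.
Qed.

Lemma lsum_rpow_le n (s : list G) : length s = n -> NoDup s ->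
  lsum (fun x => rpow (Cmod (f x)) p) s
  <= INR (Nat.min n (2 * N)) * rpow B p + Rpower K p * Rpower 2 q * zeta_partial q n.
Proof.
  assert (HC : 0 < Rpower K p * Rpower 2 q) by (apply Rmult_lt_0_compat; apply Rpower_gt0).
  assert (HBp := rpow_ge0 B p).
  revert s. induction n as [|n IH]; intros s Hlen Hs.
  { destruct s; [|discriminate]. unfold lsum; simpl. lra. }
  destruct (exists_argmin (fun x => Cmod (f x)) s) as [x [Hx Hmin]]; [intros ->; discriminate|].
  destruct (in_split _ _ Hx) as [l1 [l2 ->]].
  rewrite length_app in Hlen; simpl in Hlen.
  assert (IH' := IH (l1 ++ l2) ltac:(rewrite length_app; lia) (NoDup_remove_1 _ _ _ Hs)).
  rewrite lsum_app in IH' |- *. change (lsum ?g (x :: l2)) with (g x + lsum g l2).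
  change (zeta_partial q (S n)) with (zeta_partial q n + Rpower (INR (S n)) (- q)).
  assert (Hterm := Rpower_gt0 (INR (S n)) (- q)).
  destruct (Nat.le_gt_cases (S n) (2 * N)) as [Hsmall|Hlarge].
  - rewrite Nat.min_l in IH' |- * by lia. rewrite S_INR in Hterm |- *.
    assert (rpow (Cmod (f x)) p <= rpow B p) by (apply rpow_le; [lra|split; [apply Cmod_ge_0|apply f_le]]).
    nra.
  - rewrite Nat.min_r in IH' |- * by lia.
    assert (Hx_le := rpow_of_min_le (l1 ++ x :: l2) x Hs).
    rewrite length_app in Hx_le; simpl in Hx_le. replace (length l1 + S (length l2))%nat with (S n) in Hx_le by lia.
    specialize (Hx_le ltac:(lia) Hmin). nra.
Qed.

Lemma in_lp_of_small_level_sets : in_lp G p f.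
Proof.
  assert (Hq := exponent_ratio_gt1).
  exists (INR (2 * N) * rpow B p + Rpower K p * Rpower 2 q * (q / (q - 1))).
  intros s Hs. eapply Rle_trans; [apply (lsum_rpow_le (length s)); auto|].
  assert (HC : 0 < Rpower K p * Rpower 2 q) by (apply Rmult_lt_0_compat; apply Rpower_gt0).
  assert (HBp := rpow_ge0 B p).
  assert (INR (Nat.min (length s) (2 * N)) <= INR (2 * N)) by (apply le_INR; lia).
  assert (zeta_partial q (length s) <= q / (q - 1)) by (apply zeta_partial_le, Hq).
  nra.
Qed.

End LevelSets.

Lemma large_level_set_of_not_in_lp (G : Group) (f : G -> C) (B p alpha K : R) (N : nat) :
  0 < alpha -> alpha < p -> 0 < K -> (forall z, Cmod (f z) <= B) -> ~ in_lp G p f ->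
  exists eps, (0 < eps <= B) /\ exists A : list G, NoDup A /\ (forall a, In a A -> eps <= Cmod (f a)) /\
    INR N + Rpower (K / eps) alpha <= INR (length A).
Proof.
  intros Halpha Hp HK Hf Hnot. apply NNPP; intros Hnone. apply Hnot.
  apply (in_lp_of_small_level_sets G f B p alpha K N Halpha Hp HK Hf).
  intros eps Heps A HA HAeps. apply Rnot_le_lt. intros Hlarge. apply Hnone.
  assert (HK_eps := Rpower_gt0 (K / eps) alpha). assert (HN := pos_INR N).
  destruct A as [|a A0]; [change (INR (length [])) with 0 in Hlarge; lra|].
  exists eps. split; [split; [exact Heps|]|exists (a :: A0); auto].
  apply Rle_trans with (Cmod (f a)); [apply HAeps; left; reflexivity|apply Hf].
Qed.

Lemma abs_summable_bound_le {T : Type} (g : T -> C) M y : abs_summable_bound g M -> Cmod (g y) <= M.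
Proof.
  intros Hg. specialize (Hg [y] (NoDup_cons y (@in_nil _ y) (NoDup_nil _))).
  unfold lsum in Hg; simpl in Hg. lra.
Qed.

Section T1Colouring.
Variables (G : Group) (f : G -> C) (f1 f2 : G -> G -> C) (M1 M2 : R).
Local Notation "x ⋅ y" := (gmul G x y) (at level 40, left associativity).
Local Notation "x ^-1" := (ginv G x) (at level 9).
Local Notation e := (gone G).

Hypothesis f_split : forall x y, f (x^-1 ⋅ y) = Cplus (f1 x y) (f2 x y).
Hypothesis f1_rows : forall x, abs_summable_bound (f1 x) M1.
Hypothesis f2_columns : forall y, abs_summable_bound (fun x => f2 x y) M2.

Lemma T1_bounded z : Cmod (f z) <= M1 + M2.
Proof.
  assert (Hz := f_split e (e ⋅ z)). rewrite gmulKg, gmul_1l in Hz. rewrite Hz.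
  eapply Rle_trans; [apply Cmod_triangle|].
  apply Rplus_le_compat.
  - apply (abs_summable_bound_le (f1 e)), f1_rows.
  - apply (abs_summable_bound_le (fun x => f2 x z)), f2_columns.
Qed.

Variables (eps : R) (S : list G).
Hypothesis eps_gt0 : 0 < eps.
Hypothesis S_symmetric : symmetric_set G S.
Hypothesis S_nonempty : S <> [].
Hypothesis one_notin_S : ~ In e S.
Hypothesis S_large : forall s, In s S -> eps <= Cmod (f s) \/ eps <= Cmod (f s^-1).

Definition heavy (v y : G) : Prop := eps / 2 <= Cmod (f1 v y) \/ eps / 2 <= Cmod (f2 y v).

Lemma heavy_of_large x y : eps <= Cmod (f (x^-1 ⋅ y)) -> heavy x y \/ heavy y x.
Proof.
  rewrite f_split. intros Hxy. assert (Htri := Cmod_triangle (f1 x y) (f2 x y)).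
  destruct (Rle_lt_dec (eps / 2) (Cmod (f1 x y))).
  - left. left. assumption.
  - right. right. lra.
Qed.

Lemma cayley_edge_heavy x y : (exists s, In s S /\ y = x ⋅ s) -> heavy x y \/ heavy y x.
Proof.
  intros [s [Hs ->]]. destruct (S_large s Hs) as [Hf|Hf].
  - apply heavy_of_large. rewrite gmulKg. exact Hf.
  - apply or_comm, heavy_of_large.
    rewrite gmul_invM_l. exact Hf.
Qed.

Lemma heavy_outdeg_le v L : NoDup L -> (forall y, In y L -> heavy v y) ->
  INR (length L) * (eps / 2) <= M1 + M2.
Proof.
  intros HL Hheavy.
  set (L1 := filter (fun y => asbool (eps / 2 <= Cmod (f1 v y))) L).
  set (L2 := filter (fun y => negb (asbool (eps / 2 <= Cmod (f1 v y)))) L).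
  assert (Hlen : (length L1 + length L2)%nat = length L) by apply filter_length.
  assert (H1 : INR (length L1) * (eps / 2) <= M1).
  { eapply Rle_trans; [apply (lsum_ge_const (fun y => Cmod (f1 v y)))|apply f1_rows, NoDup_filter, HL].
    intros y Hy. apply filter_In in Hy. destruct (asboolP (eps / 2 <= Cmod (f1 v y))); [assumption|].
    destruct Hy; discriminate. }
  assert (H2 : INR (length L2) * (eps / 2) <= M2).
  { eapply Rle_trans; [apply (lsum_ge_const (fun x => Cmod (f2 x v)))|apply f2_columns, NoDup_filter, HL].
    intros y Hy. apply filter_In in Hy. destruct Hy as [Hy Hsmall].
    destruct (asboolP (eps / 2 <= Cmod (f1 v y))); [discriminate|].
    destruct (Hheavy y Hy); tauto. }
  rewrite <- Hlen, plus_INR. lra.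
Qed.

Theorem T1_cayley_colouring (D : nat) : 2 * (M1 + M2) / eps <= INR D ->
  exists c : G -> nat, (forall g, (c g < 2 * D + 1)%nat) /\ (forall g s, In s S -> c g <> c (g ⋅ s)).
Proof.
  intros HD. apply cayley_colouring_compactness; [exact S_symmetric|exact S_nonempty|].
  intros X HX.
  destruct (finite_colouring_of_bounded_outdeg G (fun x y => exists s, In s S /\ y = x ⋅ s)
              heavy D) with (X := X) as [c [Hlt Hprop]]; [..|exact HX|].
  - intros x [s [Hs Hx]]. apply one_notin_S.
    assert (Hs1 : s = e) by (rewrite <- (gmulKg G x s), <- Hx; apply gmul_Vl).
    rewrite <- Hs1. exact Hs.
  - exact cayley_edge_heavy.
  - intros v L HL Hheavy. apply INR_le. apply Rle_trans with (2 * (M1 + M2) / eps); [|exact HD].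
    apply (Rmult_le_reg_r (eps / 2)); [lra|].
    replace (2 * (M1 + M2) / eps * (eps / 2)) with (M1 + M2) by (field; lra).
    apply (heavy_outdeg_le v L HL Hheavy).
  - exists c. split; [exact Hlt|]. intros x s Hx Hs Hxs. apply Hprop; eauto.
Qed.

End T1Colouring.

Lemma symmetric_hull (G : Group) (A : list G) : NoDup A ->
  exists S : list G, NoDup S /\ symmetric_set G S /\ ~ In (gone G) S /\
    (forall s, In s S -> In s A \/ In (ginv G s) A) /\ (length A <= length S + 1)%nat.
Proof.
  intros HA. set (A' := remove classic_eq_dec (gone G) A).
  exists (nodup classic_eq_dec (A' ++ map (ginv G) A')).
  assert (Hmem : forall s, In s (nodup classic_eq_dec (A' ++ map (ginv G) A')) <->
                           In s A' \/ exists a, In a A' /\ s = ginv G a).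
  { intros s. rewrite nodup_In, in_app_iff, in_map_iff.
    split; intros [Hs|[a [Ha Hs]]]; eauto. }
  repeat split.
  - apply NoDup_nodup.
  - intros s Hs. apply Hmem. apply Hmem in Hs. destruct Hs as [Hs|[a [Ha ->]]].
    + right. exists s. split; [exact Hs|reflexivity].
    + left. rewrite ginvK. exact Ha.
  - intros H1. apply Hmem in H1. destruct H1 as [H1|[a [Ha Hinv]]].
    + exact (remove_In classic_eq_dec A (gone G) H1).
    + apply in_remove in Ha. apply Ha, ginv_eq1. symmetry. exact Hinv.
  - intros s Hs. apply Hmem in Hs. destruct Hs as [Hs|[a [Ha ->]]].
    + left. apply in_remove in Hs. apply Hs.
    + right. rewrite ginvK. apply in_remove in Ha. apply Ha.
  - rewrite Nat.add_1_r.
    change (Datatypes.S (length ?l)) with (length (gone G :: l)).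
    apply NoDup_incl_length; [exact HA|]. intros a Ha.
    destruct (classic_eq_dec (gone G) a) as [->|Hne]; [left; reflexivity|].
    right. apply Hmem. left. apply in_in_remove; [intros E; apply Hne; symmetry; exact E|exact Ha].
Qed.

Lemma Lit_gt_not_in_lp (G : Group) (alpha : R) : 0 < alpha -> Rbar_lt (Finite alpha) (Lit G) ->
  exists p, alpha < p /\ exists f, T1 G f /\ ~ in_lp G p f.
Proof.
  intros Halpha Hlit.
  set (P := fun p => 0 < p /\ forall f : G -> C, T1 G f -> in_lp G p f).
  assert (Hp : exists p, alpha < p /\ ~ P p).
  { destruct (Glb_Rbar_correct P) as [Hlb _]. unfold Lit in Hlit. fold P in Hlit.
    destruct (Glb_Rbar P) as [l| |]; simpl in Hlit.
    - exists ((alpha + l) / 2). split; [lra|]. intros HP. specialize (Hlb _ HP). simpl in Hlb. lra.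
    - exists (alpha + 1). split; [lra|]. intros HP. exact (Hlb _ HP).
    - contradiction. }
  destruct Hp as [p [Hap HnP]]. exists p. split; [exact Hap|].
  apply NNPP; intros Hnone. apply HnP. split; [lra|].
  intros f Hf. apply NNPP; intros Hf'. apply Hnone. exists f. split; assumption.
Qed.

Lemma nat_ceil_exists (x : R) : 0 <= x -> exists n : nat, x <= INR n <= x + 1.
Proof.
  intros Hx. destruct (archimed x) as [Hup Hup1].
  assert (Hpos : (0 <= up x)%Z) by (apply le_IZR; lra).
  exists (Z.to_nat (up x)). rewrite INR_IZR_INZ, Z2Nat.id by exact Hpos. lra.
Qed.

Lemma Rpower_root_le (x y a : R) : 0 < a -> 0 < x -> Rpower x a <= y -> x <= Rpower y (1 / a).
Proof.
  intros Ha Hx Hxy. rewrite <- (Rpower_1 x) at 1 by exact Hx.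
  replace 1 with (a * (1 / a)) at 1 by (field; lra). rewrite <- Rpower_mult.
  apply Rle_Rpower_l; [apply Rlt_le, Rdiv_lt_0_compat; lra|split; [apply Rpower_gt0|exact Hxy]].
Qed.

Lemma cay_colourable_of_colouring (G : Group) (S : list G) (k : nat) (t : R) : INR k <= t ->
  (exists c : G -> nat, (forall g, (c g < k)%nat) /\ (forall g s, In s S -> c g <> c (gmul G g s))) ->
  cay_colourable G S t.
Proof.
  intros Hkt [c [Hlt Hprop]]. exists c. split; [|exact Hprop].
  intros g. unfold Int_part. destruct (archimed t) as [Hup _].
  assert (Hk : (Z.of_nat k < up t)%Z) by (apply lt_IZR; rewrite <- INR_IZR_INZ; lra).
  specialize (Hlt g). lia.
Qed.

(* [K = 7 B + 1] is chosen so that [2 D + 1 <= 4 B / eps + 3 <= K / eps]. *)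
Lemma colour_count_le (B eps alpha : R) (D n : nat) : 0 < alpha -> 0 < eps <= B ->
  INR D <= 2 * B / eps + 1 -> Rpower ((7 * B + 1) / eps) alpha <= INR n ->
  INR (2 * D + 1) <= Rpower (INR n) (1 / alpha).
Proof.
  intros Halpha [Heps HepsB] HD Hn.
  apply Rle_trans with ((7 * B + 1) / eps).
  - rewrite plus_INR, mult_INR. change (INR 2) with 2. change (INR 1) with 1.
    apply Rle_trans with (4 * B / eps + 3); [unfold Rdiv in *; lra|].
    unfold Rdiv. apply (Rmult_le_reg_r eps); [exact Heps|].
    rewrite !Rmult_plus_distr_r, !Rmult_assoc, !Rinv_l by lra. lra.
  - apply Rpower_root_le; [exact Halpha|apply Rdiv_lt_0_compat; lra|exact Hn].
Qed.

Theorem corollary1p8 (G : Group) (alpha : R) :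
  0 < alpha -> Rbar_lt (Finite alpha) (Lit G) ->
  forall N : nat, exists S : list G,
    NoDup S /\ (N <= length S)%nat /\ symmetric_set G S /\
    cay_colourable G S (Rpower (INR (length S)) (1 / alpha)).
Proof.
  intros Halpha Hlit N.
  destruct (Lit_gt_not_in_lp G alpha Halpha Hlit)
    as [p [Hp [f [[f1 [f2 [Hsplit [[M1 HM1] [M2 HM2]]]]] Hnot]]]].
  set (B := M1 + M2).
  assert (HB : forall z, Cmod (f z) <= B) by exact (T1_bounded G f f1 f2 M1 M2 Hsplit HM1 HM2).
  assert (HB0 : 0 <= B) by (apply Rle_trans with (Cmod (f (gone G))); [apply Cmod_ge_0|apply HB]).
  destruct (large_level_set_of_not_in_lp G f B p alpha (7 * B + 1) (S N))
    as [eps [[Heps HepsB] [A [HA [HAeps HAlen]]]]]; [assumption|assumption|lra|assumption|assumption|].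
  assert (HK := Rpower_gt0 ((7 * B + 1) / eps) alpha).
  destruct (symmetric_hull G A HA) as [S [HS [HSsym [HS1 [HSA HSlen]]]]].
  assert (HSsize : INR N + Rpower ((7 * B + 1) / eps) alpha <= INR (length S)).
  { apply le_INR in HSlen. rewrite plus_INR in HSlen. rewrite S_INR in HAlen.
    change (INR 1) with 1 in HSlen. lra. }
  destruct (nat_ceil_exists (2 * B / eps)) as [D [HD1 HD2]];
    [apply Rmult_le_pos, Rlt_le, Rinv_0_lt_compat; lra|].
  exists S. split; [exact HS|]. split; [apply INR_le; lra|]. split; [exact HSsym|].
  apply cay_colourable_of_colouring with (2 * D + 1)%nat;
    [apply colour_count_le with B eps; [assumption|lra|assumption|generalize (pos_INR N); lra]|].
  apply (T1_cayley_colouring G f f1 f2 M1 M2 Hsplit HM1 HM2 eps S Heps HSsym); [|exact HS1| |exact HD1].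
  - intros ->. simpl in HSsize. generalize (pos_INR N). lra.
  - intros s Hs. destruct (HSA s Hs); [left|right]; apply HAeps; assumption.
Qed.
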